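(* Let $1<a_1<a_2$ be coprime integers. Then: (1) the sets $r_0^{-1}(\mathbb{Q})=\{t\in[1,\infty]: r_0(t)\in\mathbb{Q}\}$ and $\mathcal{T}=\{t\in(1,\infty): |P(t)|>\frac{1}{a_2},\ r_0(t)\in\mathbb{Q}\}$ are both countable; (2) $r_0$ is continuous; (3) for every $a>1$, $r_0^{-1}(\mathbb{Q})$ is dense in the ray $(a,\infty)$ (i.e. $(a,\infty)$ is contained in the closure of $r_0^{-1}(\mathbb{Q})$).
   Context: For $t\in[1,\infty)$ and $(u,v)\in\mathbb{R}^2$, $\|(u,v)\|_t=(|u|^t+|v|^t)^{1/t}$, and $\|(u,v)\|_\infty=\max(|u|,|v|)$. For $t\in[1,\infty]$ define $\mu_t(r)=\left\|\left(\frac{1-r}{a_1},\frac{r}{a_2}\right)\right\|_t$ for $r\in[0,1]$, $r_0(t)=\min\{r\in[0,1]:\mu_t(r)=\frac{1}{a_2}\}$ (a function $[1,\infty]\to[0,1]$), and $P(t)=\mu_t'(r_0(t))$ (derivative in $r$). *)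

From HB Require Import structures.
From mathcomp Require Import all_boot all_order all_algebra.
From mathcomp Require Import all_classical all_reals all_analysis.
Set Implicit Arguments. Unset Strict Implicit. Unset Printing Implicit Defensive.
Import Order.TTheory GRing.Theory Num.Theory.
Import numFieldNormedType.Exports.
Local Open Scope classical_set_scope.
Local Open Scope ring_scope.

Section Defs.
Variable R : realType.

Definition is_rat (x : R) : Prop := exists q : rat, x = ratr q.

(* mu_t(r) = || ((1-r)/a1, r/a2) ||_t for t in [1, +oo] (extended reals);
   value at t = -oo is irrelevant junk *)
Definition mu (a1 a2 : R) (t : \bar R) (r : R) : R :=
  let u := (1 - r) / a1 in
  let v := r / a2 in
  match t with
  | +oo%E => Num.max `|u| `|v|
  | (s%:E)%E => powR (powR `|u| s + powR `|v| s) s^-1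
  | -oo%E => 0
  end.

(* r0(t) = min { r in [0,1] : mu_t(r) = 1/a2 } (the set is closed and nonempty,
   so its infimum is its minimum) *)
Definition r0 (a1 a2 : R) (t : \bar R) : R :=
  inf [set r : R | 0 <= r <= 1 /\ mu a1 a2 t r = a2^-1].

Definition P (a1 a2 : R) (t : \bar R) : R :=
  derive1 (mu a1 a2 t) (r0 a1 a2 t).

End Defs.

(* Write c = a2/a1 > 1. For finite t, mu_t(r) = 1/a2 iff S_t(r) := |c(1-r)|^t + |r|^t = 1,
   so r0(t) is the least root in [0,1] of the convex function S_t - 1, which is positive at 0
   and vanishes at 1; in particular S_t > 1 on [0, r0(t)) and S_t <= 1 on [r0(t), 1].
   At r = r0(t) both c(1-r) and r lie in (0,1), so S_s(r) < S_t(r) = 1 for s > t: r0 is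
   strictly decreasing on [1, +oo), and it stays above r0(+oo) = 1 - a1/a2. Hence r0 is
   injective on [1, +oo] and r0^-1(Q) is countable. For continuity at t0, pick r slightly
   below (resp. above) r0(t0) with S_t0(r) > 1 (resp. < 1, using convexity); by continuity
   of S_t(r) in t the same strict inequality holds for t near t0, which places r below
   (resp. above) r0(t). Density of r0^-1(Q) then follows by the intermediate value theorem. *)

From HB Require Import structures.
From mathcomp Require Import all_boot all_order all_algebra.
From mathcomp Require Import all_classical all_reals all_analysis.
From mathcomp Require Import ring lra.
Import Order.TTheory GRing.Theory Num.Theory.
Import numFieldNormedType.Exports.
Local Open Scope classical_set_scope.
Local Open Scope ring_scope.
Set Implicit Arguments. Unset Strict Implicit. Unset Printing Implicit Defensive.

Lemma continuous_powR_norm (R : realType) (t : R) : 0 < t ->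
  continuous (fun z : R => powR `|z| t).
Proof.
move=> t0 x; have [->|x0] := eqVneq x 0.
  apply/cvgrPdist_lt => e e0; rewrite normr0 powR0 ?gt_eqF //.
  apply/nbhs_ballP; exists (powR e t^-1); first by rewrite /= powR_gt0.
  move=> z; rewrite /ball /= !sub0r !normrN (ger0_norm (powR_ge0 _ _)) => ze.
  have -> : e = powR (powR e t^-1) t by rewrite -powRrM mulVf ?gt_eqF ?powRr1 ?ltW.
  by apply: gt0_ltr_powR; rewrite // nnegrE ?powR_ge0.
have powR_cont : {for `|x|, continuous (@powR R ^~ t)}.
  apply/differentiable_continuous/derivable1_diffP.
  by apply: derivable_powR; rewrite in_itv /= andbT normr_gt0.
have norm_cont : {for x, continuous (fun z : R => `|z|)} by apply: norm_continuous.
exact: continuous_comp norm_cont powR_cont.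
Qed.

Lemma continuous_powR_exponent (R : realType) (a : R) : 0 < a -> continuous (powR a).
Proof.
move=> a0 x; have -> : powR a = expR \o *%R^~ (ln a).
  by apply: funext => t; rewrite /powR gt_eqF.
by apply: continuous_comp; [apply: cvgM; [exact: cvg_id | exact: cvg_cst] | exact: continuous_expR].
Qed.

Section PowerSum.
Variables (R : realType) (c : R).
Hypothesis c_gt1 : 1 < c.

Let c_gt0 : 0 < c. Proof. exact: lt_trans ltr01 c_gt1. Qed.

(* [powsum (a2/a1) t r = (a2 * mu_t(r))^t], see [mu_eq_inv_iff]. *)
Definition powsum (t r : R) : R := powR `|c * (1 - r)| t + powR `|r| t.

Lemma continuous_powsum t : 0 < t -> continuous (powsum t).
Proof.
move=> t0; have affine_cont : continuous (fun r : R => c * (1 - r)).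
  by move=> y; apply: cvgM; [exact: cvg_cst | apply: cvgB; [exact: cvg_cst | exact: cvg_id]].
have norm_cont : continuous (fun z : R => powR `|z| t) := continuous_powR_norm t0.
have first_cont : continuous (fun r : R => powR `|c * (1 - r)| t) :=
  fun x => continuous_comp (affine_cont x) (norm_cont _).
by move=> x; apply: cvgD; [exact: first_cont | exact: norm_cont].
Qed.

Lemma continuous_powsum_exponent r : 0 < r -> r < 1 -> continuous (powsum ^~ r).
Proof.
move=> r0 r1 t; apply: cvgD; apply: continuous_powR_exponent.
  by rewrite normr_gt0 mulf_neq0 ?gt_eqF ?subr_gt0.
by rewrite normr_gt0 gt_eqF.
Qed.

Lemma powsum_at1 t : 0 < t -> powsum t 1 = 1.
Proof.
by move=> t0; rewrite /powsum subrr mulr0 normr0 powR0 ?gt_eqF // add0r normr1 powR1.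
Qed.

Lemma powsum_at0 t : 1 <= t -> 1 < powsum t 0.
Proof.
move=> t1; rewrite /powsum subr0 mulr1 normr0 powR0 ?gt_eqF ?(lt_le_trans ltr01) //.
by rewrite addr0 gtr0_norm // (lt_le_trans c_gt1) // le1r_powR // ltW.
Qed.

Lemma powsum_convex t l a b : 1 <= t -> 0 <= l <= 1 -> 0 <= a <= 1 -> 0 <= b <= 1 ->
  powsum t (l * a + (1 - l) * b) <= l * powsum t a + (1 - l) * powsum t b.
Proof.
move=> t1 /andP[l0 l1] /andP[a0 a1] /andP[b0 b1].
have convex_pow x y : 0 <= x -> 0 <= y ->
    powR (l * x + (1 - l) * y) t <= l * powR x t + (1 - l) * powR y t.
  move=> x0 y0; have := @convex_powR R t t1 (Itv01 l0 l1) x y.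
  by rewrite !inE /= !in_itv /= !andbT !convRE => /(_ x0 y0).
have scaled_ge0 x : x <= 1 -> 0 <= c * (1 - x) by move=> x1; rewrite mulr_ge0 ?subr_ge0 // ltW.
have m1 : l * a + (1 - l) * b <= 1 by nra.
rewrite /powsum !ger0_norm ?scaled_ge0 ?addr_ge0 ?mulr_ge0 ?subr_ge0 //.
have -> : c * (1 - (l * a + (1 - l) * b)) = l * (c * (1 - a)) + (1 - l) * (c * (1 - b)).
  by ring.
have := convex_pow _ _ (scaled_ge0 _ a1) (scaled_ge0 _ b1).
have := convex_pow _ _ a0 b0; lra.
Qed.

Lemma powsum_chord t a b r : 1 <= t -> 0 <= a -> a <= r -> r <= b -> b <= 1 ->
  (b - a) * powsum t r <= (b - r) * powsum t a + (r - a) * powsum t b.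
Proof.
move=> t1 a0 ar rb b1; have [eab|ab] := eqVneq a b.
  have ra : r = a by apply/le_anti; rewrite ar eab rb.
  by rewrite ra -eab !subrr !mul0r addr0.
have ba : 0 < b - a by rewrite subr_gt0 lt_neqAle ab (le_trans ar).
set l := (b - r) / (b - a).
have l01 : 0 <= l <= 1.
  by rewrite /l divr_ge0 ?subr_ge0 ?rb ?(le_trans ar rb) //= ler_pdivrMr // mul1r; lra.
have := @powsum_convex t l a b t1 l01.
rewrite a0 b1 (le_trans a0 (le_trans ar rb)) (le_trans ar (le_trans rb b1)).
have -> : l * a + (1 - l) * b = r by rewrite /l; field; rewrite gt_eqF.
move=> /(_ isT isT); rewrite -(ler_pM2l ba) => /le_trans; apply.
have e1 : (b - a) * l = b - r by rewrite /l mulrC divfK ?gt_eqF.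
have e2 : (b - a) * (1 - l) = r - a by rewrite mulrBr mulr1 e1; ring.
by rewrite mulrDr mulrA e1 mulrA e2.
Qed.

Lemma powsum_exponent1 r : 0 <= r -> r < 1 -> 1 < powsum 1 r.
Proof.
move=> r0 r1; have cr0 : 0 <= c * (1 - r) by rewrite mulr_ge0 ?subr_ge0 ?ltW.
rewrite /powsum !ger0_norm // !powRr1 //.
have : 0 < (c - 1) * (1 - r) by rewrite mulr_gt0 ?subr_gt0.
lra.
Qed.

Lemma powsum_decreasing_exponent s t r : 0 < r -> r < 1 -> c * (1 - r) <= 1 -> s < t ->
  powsum t r < powsum s r.
Proof.
move=> r0 r1 cr1 st; have cr0 : 0 < c * (1 - r) by rewrite mulr_gt0 ?subr_gt0.
rewrite /powsum !gtr0_norm //; apply: ler_ltD.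
  by apply: ger_powR; rewrite ?cr0 ?cr1 // ltW.
by rewrite /powR gt_eqF // ltr_expR ltr_nM2r // ln_lt0 // r0 r1.
Qed.

(* With w := (2c)^(-1/(t-1)) and q := 1 - w/c one gets w^t = w/(2c) and q^t <= q. *)
Lemma exists_powsum_lt1 t : 1 < t -> exists q, [/\ 0 < q, q < 1 & powsum t q < 1].
Proof.
move=> t1; have t10 : 0 < t - 1 by rewrite subr_gt0.
have k0 : 0 < (2 * c)^-1 by rewrite invr_gt0 mulr_gt0.
have k1 : (2 * c)^-1 < 1 by rewrite invf_lt1 ?mulr_gt0 //; move: c_gt1; lra.
set w := powR (2 * c)^-1 (t - 1)^-1.
have w0 : 0 < w by rewrite powR_gt0.
have w1 : w < 1.
  apply: (@lt_le_trans _ _ (powR 1 (t - 1)^-1)); last by rewrite powR1.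
  by apply: gt0_ltr_powR; rewrite ?invr_gt0 ?nnegrE ?ltW.
have wc0 : 0 < w / c by rewrite divr_gt0.
have wc1 : w / c < 1 by rewrite ltr_pdivrMr // mul1r (lt_trans w1).
exists (1 - w / c); split; [by rewrite subr_gt0 | by rewrite ltrBlDr ltrDl |].
rewrite /powsum subKr mulrC divfK ?gt_eqF // !gtr0_norm ?subr_gt0 //.
have wt : powR w t = w / (2 * c).
  rewrite -(mulr_powRB1 (ltW w0) (lt_trans ltr01 t1)) /w -powRrM mulVf ?gt_eqF //.
  by rewrite powRr1 ?ltW.
have qt : powR (1 - w / c) t <= 1 - w / c.
  by apply: ge1r_powR; [apply/andP; split; lra | exact: ltW].
have half : w / (2 * c) = w / c / 2 by rewrite invfM mulrA mulrAC.
by move: wt qt; rewrite half; lra.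
Qed.

Lemma exists_exponent_powsum_lt1 r : 0 < r -> r < 1 -> c * (1 - r) < 1 ->
  exists2 T, 1 <= T & powsum T r < 1.
Proof.
move=> r0 r1 cr1; have cr0 : 0 < c * (1 - r) by rewrite mulr_gt0 ?subr_gt0.
set m := Num.max (c * (1 - r)) r.
have cr_le_m : c * (1 - r) <= m by rewrite le_max lexx.
have r_le_m : r <= m by rewrite le_max lexx orbT.
have m0 : 0 < m by rewrite lt_max cr0.
have m1 : m < 1 by rewrite gt_max cr1 r1.
have lnm : ln m < 0 by rewrite ln_lt0 // m0 m1.
set T := Num.max 1 (ln (3^-1) / ln m).
have T1 : 1 <= T by rewrite le_max lexx.
exists T => //.
have mT : powR m T <= 3^-1.
  have : ln (3^-1) / ln m <= T by rewrite le_max lexx orbT.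
  rewrite ler_ndivrMr // => Tlnm.
  rewrite /powR gt_eqF // -[X in _ <= X](@lnK R) ?posrE ?invr_gt0 //.
  by rewrite ler_expR.
have pow_le_m x : 0 < x -> x <= m -> powR x T <= powR m T.
  move=> x0 xm; apply: ge0_ler_powR => //; first exact: le_trans ler01 T1.
    by rewrite nnegrE ltW.
  by rewrite nnegrE ltW.
have := pow_le_m _ cr0 cr_le_m; have := pow_le_m _ r0 r_le_m.
by rewrite /powsum !gtr0_norm //; lra.
Qed.

Definition level (t : R) : set R := [set r | 0 <= r <= 1 /\ powsum t r = 1].

Definition rho (t : R) : R := inf (level t).

Lemma level1 t : 0 < t -> level t 1.
Proof. by move=> t0; split; [rewrite ler01 lexx | exact: powsum_at1]. Qed.

Lemma has_inf_level t : 0 < t -> has_inf (level t).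
Proof. by move=> t0; split; [exists 1; exact: level1 | exists 0 => r [/andP[]]]. Qed.

Lemma rho_ge0 t : 0 < t -> 0 <= rho t.
Proof. by move=> t0; apply: lb_le_inf => [|r [/andP[]]]; [exists 1; exact: level1|]. Qed.

Lemma rho_le1 t : 0 < t -> rho t <= 1.
Proof. by move=> t0; apply: ge_inf; [case: (has_inf_level t0) | exact: level1]. Qed.

Lemma level_rho t : 0 < t -> level t (rho t).
Proof.
move=> t0; split; first by rewrite rho_ge0 ?rho_le1.
apply/eqP/negPn/negP => neq1.
have d0 : 0 < `|powsum t (rho t) - 1| by rewrite normr_gt0 subr_eq0.
have cont : {for rho t, continuous (powsum t)} by exact: continuous_powsum.
have /cvgrPdist_lt/(_ _ d0)/nbhs_ballP[e /= e0 near_rho] := cont.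
have [z zlev zlt] := inf_adherent e0 (has_inf_level t0).
have rz : rho t <= z by apply: ge_inf; [case: (has_inf_level t0) |].
have := near_rho z; rewrite /ball /= distrC ger0_norm ?subr_ge0 // ltrBlDl => /(_ zlt).
by rewrite zlev.2 ltxx.
Qed.

Lemma rho_le_of_powsum_le1 t r : 1 <= t -> 0 <= r -> r <= 1 -> powsum t r <= 1 -> rho t <= r.
Proof.
move=> t1 r0 r1 Sr; have t0 : 0 < t := lt_le_trans ltr01 t1.
have cont : {within `[0, r], continuous (powsum t)}.
  exact/continuous_subspaceT/continuous_powsum.
have bounds : Num.min (powsum t 0) (powsum t r) <= 1 <= Num.max (powsum t 0) (powsum t r).
  by rewrite ge_min le_max Sr orbT (ltW (powsum_at0 t1)).
have [z] := IVT r0 cont bounds; rewrite in_itv /= => /andP[z0 zr] Sz.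
have rz : rho t <= z.
  apply: ge_inf; first by case: (has_inf_level t0).
  by split; [rewrite z0 (le_trans zr r1) | exact/esym].
exact: le_trans rz zr.
Qed.

Lemma rho_lt_of_powsum_lt1 t r : 1 <= t -> 0 <= r -> r <= 1 -> powsum t r < 1 -> rho t < r.
Proof.
move=> t1 r0 r1 Sr; rewrite lt_neqAle (rho_le_of_powsum_le1 t1 r0 r1 (ltW Sr)) andbT.
apply/eqP => rhor; have [_] := level_rho (lt_le_trans ltr01 t1).
by rewrite rhor; move: Sr => /[swap] ->; rewrite ltxx.
Qed.

Lemma powsum_gt1_of_lt_rho t r : 1 <= t -> 0 <= r -> r < rho t -> 1 < powsum t r.
Proof.
move=> t1 r0 rlt; have r1 : r <= 1 by rewrite (le_trans (ltW rlt)) ?rho_le1 ?(lt_le_trans ltr01 t1).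
by rewrite ltNge; apply/negP => /(rho_le_of_powsum_le1 t1 r0 r1); rewrite leNgt rlt.
Qed.

Lemma powsum_le1_of_rho_le t r : 1 <= t -> rho t <= r -> r <= 1 -> powsum t r <= 1.
Proof.
move=> t1 rhor r1; have t0 : 0 < t := lt_le_trans ltr01 t1.
have [/andP[rho0 _] Srho] := level_rho t0.
have [rho1|rho_neq1] := eqVneq (rho t) 1.
  by rewrite (_ : r = 1) ?powsum_at1 //; apply/le_anti; rewrite r1 -rho1 rhor.
have gap : 0 < 1 - rho t by rewrite subr_gt0 lt_neqAle rho_neq1 (le_trans rhor r1).
have := powsum_chord t1 rho0 rhor r1 (lexx 1); rewrite Srho powsum_at1 // => chord.
by rewrite -(ler_pM2l gap) mulr1; apply: le_trans chord _; lra.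
Qed.

Lemma lt_rho_of_powsum_gt1 t r : 1 <= t -> r <= 1 -> 1 < powsum t r -> r < rho t.
Proof.
move=> t1 r1 Sr; rewrite ltNge; apply/negP => rhor.
by move: Sr; rewrite ltNge powsum_le1_of_rho_le.
Qed.

Lemma powsum_lt1_between t r q : 1 <= t -> rho t < r -> r <= q -> q <= 1 ->
  powsum t q < 1 -> powsum t r < 1.
Proof.
move=> t1 rhor rq q1 Sq; have t0 : 0 < t := lt_le_trans ltr01 t1.
have [/andP[rho0 _] Srho] := level_rho t0.
have := powsum_chord t1 rho0 (ltW rhor) rq q1.
rewrite Srho mulr1 => chord.
have gap : 0 < q - rho t by rewrite subr_gt0 (lt_le_trans rhor rq).
rewrite -(ltr_pM2l gap) mulr1; apply: le_lt_trans chord _.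
have : 0 < (r - rho t) * (1 - powsum t q) by rewrite mulr_gt0 // subr_gt0.
lra.
Qed.

Lemma rho1 : rho 1 = 1.
Proof.
apply/le_anti; rewrite rho_le1 //=; rewrite leNgt; apply/negP => rho_lt1.
have [/andP[rho0 _] Srho] := level_rho ltr01.
by have := powsum_exponent1 rho0 rho_lt1; rewrite Srho ltxx.
Qed.

Lemma rho_lt1 t : 1 < t -> rho t < 1.
Proof.
move=> t1; have [q [q0 q1 Sq]] := exists_powsum_lt1 t1.
exact: lt_trans (rho_lt_of_powsum_lt1 (ltW t1) (ltW q0) (ltW q1) Sq) q1.
Qed.

Lemma rho_gt0 t : 1 <= t -> 0 < rho t.
Proof.
move=> t1; have [/andP[rho0 _] Srho] := level_rho (lt_le_trans ltr01 t1).
rewrite lt_neqAle rho0 andbT; apply/eqP => rho_eq0.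
by move: (powsum_at0 t1); rewrite rho_eq0 Srho ltxx.
Qed.

Lemma scaled_rho_lt1 t : 1 <= t -> c * (1 - rho t) < 1.
Proof.
move=> t1; have [_ Srho] := level_rho (lt_le_trans ltr01 t1).
rewrite ltNge; apply/negP => cr1.
have : 0 < powR `|rho t| t by rewrite powR_gt0 // normr_gt0 gt_eqF ?rho_gt0.
have := le1r_powR cr1 t1; move: Srho.
by rewrite /powsum ger0_norm ?(le_trans ler01 cr1) //; lra.
Qed.

Lemma rho_decreasing s t : 1 <= s -> s < t -> rho t < rho s.
Proof.
move=> s1 st; have t1 : 1 <= t := le_trans s1 (ltW st).
have [s_eq1|s_neq1] := eqVneq 1 s; first by rewrite -s_eq1 rho1 rho_lt1 // s_eq1.
have s_gt1 : 1 < s by rewrite lt_neqAle s_neq1.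
have [/andP[rho0 rho1'] Srho] := level_rho (lt_le_trans ltr01 s1).
apply: rho_lt_of_powsum_lt1; rewrite ?rho0 ?rho1' // -Srho.
by apply: powsum_decreasing_exponent; rewrite ?rho_gt0 ?rho_lt1 ?ltW ?scaled_rho_lt1.
Qed.

Lemma rho_lower_near (t0 e : R) : 1 <= t0 -> 0 < e ->
  \forall t \near t0, 1 <= t -> rho t0 - e < rho t.
Proof.
move=> t01 e0; have [neg|nonneg] := ltP (rho t0 - e) 0.
  by near=> t => t1; apply: lt_le_trans neg (rho_ge0 (lt_le_trans ltr01 t1)).
set r := rho t0 - e / 2.
have r0 : 0 < r by rewrite /r; lra.
have r_lt : r < rho t0 by rewrite /r; lra.
have r1 : r < 1 := lt_le_trans r_lt (rho_le1 (lt_le_trans ltr01 t01)).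
have S1 : 1 < powsum t0 r := powsum_gt1_of_lt_rho t01 (ltW r0) r_lt.
have cont : {for t0, continuous (powsum ^~ r)} by exact: continuous_powsum_exponent.
near=> t => t1.
have : r < rho t by apply: lt_rho_of_powsum_gt1 t1 (ltW r1) _; near: t; exact: cvgr_gt cont _ S1.
by rewrite /r; lra.
Unshelve. all: by end_near.
Qed.

Lemma rho_upper_near (t0 e : R) : 1 <= t0 -> 0 < e ->
  \forall t \near t0, 1 <= t -> rho t < rho t0 + e.
Proof.
move=> t01 e0; have [<-|t0_neq1] := eqVneq 1 t0.
  by near=> t => t1; rewrite rho1 (le_lt_trans (rho_le1 (lt_le_trans ltr01 t1))) ?ltrDl.
have t0_gt1 : 1 < t0 by rewrite lt_neqAle t0_neq1.
have [q [q0 q1 Sq]] := exists_powsum_lt1 t0_gt1.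
have rho_q : rho t0 < q := rho_lt_of_powsum_lt1 t01 (ltW q0) (ltW q1) Sq.
set r := Num.min q (rho t0 + e / 2).
have rho_r : rho t0 < r by rewrite lt_min rho_q /=; lra.
have rq : r <= q by rewrite ge_min lexx.
have r0 : 0 < r := le_lt_trans (rho_ge0 (lt_trans ltr01 t0_gt1)) rho_r.
have Sr : powsum t0 r < 1 := powsum_lt1_between t01 rho_r rq (ltW q1) Sq.
have cont : {for t0, continuous (powsum ^~ r)}.
  by apply: continuous_powsum_exponent => //; exact: le_lt_trans rq q1.
near=> t => t1.
have : rho t < r.
  apply: (rho_lt_of_powsum_lt1 t1 (ltW r0) (le_trans rq (ltW q1))).
  by near: t; exact: cvgr_lt cont _ Sr.
have : r <= rho t0 + e / 2 by rewrite ge_min lexx orbT.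
lra.
Unshelve. all: by end_near.
Qed.

Lemma rho_near (t0 e : R) : 1 <= t0 -> 0 < e ->
  \forall t \near t0, 1 <= t -> `|rho t0 - rho t| < e.
Proof.
move=> t01 e0; near=> t => t1; rewrite ltr_distlC.
apply/andP; split.
  by move: t1; near: t; exact: rho_lower_near.
by move: t1; near: t; exact: rho_upper_near.
Unshelve. all: by end_near.
Qed.

Lemma rho_continuous t0 : 1 < t0 -> {for t0, continuous rho}.
Proof.
move=> t01; apply/cvgrPdist_lt => e e0; near=> t.
have t1 : 1 <= t by apply: ltW; near: t; exact: lt_nbhsr.
by move: t1; near: t; exact: rho_near (ltW t01) e0.
Unshelve. all: by end_near.
Qed.

Lemma rho_gt_limit t : 1 <= t -> 1 - c^-1 < rho t.
Proof.
move=> t1; have := scaled_rho_lt1 t1.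
by rewrite -ltr_pdivlMl // mulr1 ltrBlDr -ltrBlDl.
Qed.

Lemma rho_pinfty e : 0 < e ->
  exists2 M, 1 <= M & forall t, M < t -> rho t < 1 - c^-1 + e.
Proof.
move=> e0; have ci0 : 0 < c^-1 by rewrite invr_gt0.
have ci1 : c^-1 < 1 by rewrite invf_lt1.
set r := 1 - c^-1 + Num.min e c^-1 / 2.
have m0 : 0 < Num.min e c^-1 by rewrite lt_min e0.
have m1 : Num.min e c^-1 <= c^-1 by rewrite ge_min lexx orbT.
have me : Num.min e c^-1 <= e by rewrite ge_min lexx.
have r0 : 0 < r by rewrite /r; lra.
have r1 : r < 1 by rewrite /r; lra.
have cr1 : c * (1 - r) < 1.
  have -> : c * (1 - r) = 1 - c * (Num.min e c^-1 / 2).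
    by rewrite /r; field; rewrite gt_eqF.
  by rewrite ltrBlDr ltrDl mulr_gt0 ?divr_gt0.
have [T T1 ST] := exists_exponent_powsum_lt1 r0 r1 cr1.
exists T => // t Tt; have t1 : 1 <= t := le_trans T1 (ltW Tt).
have : rho t < r.
  apply: (rho_lt_of_powsum_lt1 t1 (ltW r0) (ltW r1)).
  exact: lt_trans (powsum_decreasing_exponent r0 r1 (ltW cr1) Tt) ST.
by rewrite /r; lra.
Qed.

End PowerSum.

Lemma mu_eq_inv_iff (R : realType) (A1 A2 t r : R) : 0 < A1 -> 0 < A2 -> 0 < t ->
  mu A1 A2 t%:E r = A2^-1 <-> powsum (A2 / A1) t r = 1.
Proof.
move=> A1_gt0 A2_gt0 t0; rewrite /mu /powsum.
have -> : `|(1 - r) / A1| = A2^-1 * `|A2 / A1 * (1 - r)|.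
  rewrite !normrM (gtr0_norm A2_gt0) (gtr0_norm (x := A1^-1)) ?invr_gt0 //.
  by rewrite !mulrA mulVf ?gt_eqF // mul1r mulrC.
have -> : `|r / A2| = A2^-1 * `|r|.
  by rewrite normrM (gtr0_norm (x := A2^-1)) ?invr_gt0 // mulrC.
have A2i_ge0 : 0 <= A2^-1 by rewrite invr_ge0 ltW.
rewrite !powRM // -mulrDr powRM ?addr_ge0 ?powR_ge0 // -powRrM mulfV ?gt_eqF // powRr1 //.
split => [|->]; last by rewrite powR1 mulr1.
rewrite -{2}[A2^-1]mulr1 => /(mulfI (invr_neq0 (lt0r_neq0 A2_gt0)))/eqP.
rewrite powR_eq1 => /or3P[/eqP //||].
  by rewrite ltNge addr_ge0 ?powR_ge0.
by rewrite invr_eq0 gt_eqF.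
Qed.

Lemma r0_EFin (R : realType) (A1 A2 t : R) : 0 < A1 -> 0 < A2 -> 0 < t ->
  r0 A1 A2 t%:E = rho (A2 / A1) t.
Proof.
move=> A1_gt0 A2_gt0 t0; rewrite /r0 /rho /level; congr inf.
by apply/funext => r; apply/propext; split=> -[r01 eq1]; split=> //; apply/mu_eq_inv_iff.
Qed.

Lemma r0_pinfty (R : realType) (A1 A2 : R) : 0 < A1 -> A1 < A2 ->
  r0 A1 A2 +oo%E = 1 - A1 / A2.
Proof.
move=> A1_gt0 A12; have A2_gt0 : 0 < A2 := lt_trans A1_gt0 A12.
have k0 : 0 < A1 / A2 by rewrite divr_gt0.
have k1 : A1 / A2 < 1 by rewrite ltr_pdivrMr // mul1r.
rewrite /r0 /mu; set E := [set r | _].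
have lb r : E r -> 1 - A1 / A2 <= r.
  move=> [/andP[r0 r1] hm].
  have : `|(1 - r) / A1| <= A2^-1 by rewrite -hm le_max lexx.
  have rA1_ge0 : 0 <= (1 - r) / A1 by rewrite divr_ge0 ?subr_ge0 // ltW.
  rewrite (ger0_norm rA1_ge0) ler_pdivrMr // => h.
  have : 1 - r <= A1 / A2 by rewrite mulrC.
  lra.
have mem : E (1 - A1 / A2).
  split; first by apply/andP; split; lra.
  have -> : (1 - (1 - A1 / A2)) / A1 = A2^-1.
    by rewrite subKr mulrAC divff ?gt_eqF // mul1r.
  have A2i_ge0 : 0 <= A2^-1 by rewrite invr_ge0 ltW.
  have v_ge0 : 0 <= (1 - A1 / A2) / A2.
    by apply: divr_ge0; [rewrite subr_ge0|]; exact: ltW.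
  rewrite (ger0_norm A2i_ge0) (ger0_norm v_ge0).
  by apply/max_idPl; rewrite ler_pdivrMr // mulVf ?gt_eqF //; lra.
apply/le_anti/andP; split; last by apply: lb_le_inf => //; exists (1 - A1 / A2).
by apply: ge_inf mem; exists 0 => r [/andP[]].
Qed.

Section FirstRoot.
Variables (R : realType) (A1 A2 : R).
Hypotheses (A1_gt0 : 0 < A1) (A1_lt_A2 : A1 < A2).

Let A2_gt0 : 0 < A2. Proof. exact: lt_trans A1_gt0 A1_lt_A2. Qed.
Let c_gt1 : 1 < A2 / A1. Proof. by rewrite ltr_pdivlMr // mul1r. Qed.

Let r0_EFin_ge1 t : 1 <= t -> r0 A1 A2 t%:E = rho (A2 / A1) t.
Proof. by move=> t1; rewrite r0_EFin // (lt_le_trans ltr01 t1). Qed.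

Lemma r0_decreasing (x y : \bar R) : (1%:E <= x)%E -> (x < y)%E -> r0 A1 A2 y < r0 A1 A2 x.
Proof.
case: x => [s| |] x1 xy; last by move: x1; rewrite leeNy_eq.
  rewrite lee_fin in x1; case: y xy => [t| |] // st.
    by rewrite !r0_EFin_ge1 ?(le_trans x1 (ltW st)) // rho_decreasing.
  by rewrite r0_pinfty // r0_EFin_ge1 // -invf_div rho_gt_limit.
by move: xy; rewrite ltNge leey.
Qed.

Lemma r0_injective (x y : \bar R) : (1%:E <= x)%E -> (1%:E <= y)%E ->
  r0 A1 A2 x = r0 A1 A2 y -> x = y.
Proof.
move=> x1 y1 r0xy; have [xy|yx|//] := ltgtP x y.
  by move: (r0_decreasing x1 xy); rewrite r0xy ltxx.
by move: (r0_decreasing y1 yx); rewrite r0xy ltxx.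
Qed.

Lemma r0_continuous : {within `[1%:E, +oo%E], continuous (r0 A1 A2)}.
Proof.
apply/subspace_continuousP => x Ax; apply/cvgrPdist_lt => e e0.
case: x Ax => [s| |] Ax.
- move: Ax; rewrite /= in_itv /= leey andbT lee_fin => s1.
  rewrite /within /=; apply/nbhs_EFin; near=> t => At.
  have t1 : 1 <= t by move: At; rewrite /= in_itv /= leey andbT lee_fin.
  rewrite /from_subspace !r0_EFin_ge1 //; move: t1; near: t; exact: rho_near.
- have [M M1 near_pinfty] := rho_pinfty c_gt1 e0.
  exists M; split; first exact: num_real.
  rewrite /from_subspace; case=> [t| |] //= Mt _; last by rewrite subrr normr0.
  have t1 : 1 <= t by rewrite (le_trans M1) // ltW.
  rewrite r0_pinfty // r0_EFin_ge1 // ltr0_norm ?subr_lt0; last first.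
    by rewrite -invf_div rho_gt_limit.
  by have := near_pinfty t Mt; rewrite -invf_div; lra.
- by move: Ax; rewrite /= in_itv.
Unshelve. all: by end_near.
Qed.

Lemma closure_r0_rat (x : R) : 1 < x ->
  closure [set t | (1%:E <= t)%E /\ is_rat (r0 A1 A2 t)] x%:E.
Proof.
move=> x1 B /nbhs_EFin /nbhs_ballP [d /= d0 xdB].
set d' := Num.min (d / 2) ((x - 1) / 2).
have d'0 : 0 < d' by rewrite lt_min; apply/andP; split; lra.
have d'd : d' <= d / 2 by rewrite ge_min lexx.
have d'x : d' <= (x - 1) / 2 by rewrite ge_min lexx orbT.
have t1_gt1 : 1 < x - d' by lra.
have rho_dec : rho (A2 / A1) (x + d') < rho (A2 / A1) (x - d').
  by apply: rho_decreasing; rewrite ?ltW //; lra.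
have [q] := rat_in_itvoo rho_dec; rewrite in_itv /= => /andP[q1 q2].
have cont : {within `[x - d', x + d'], continuous (rho (A2 / A1))}.
  apply: continuous_in_subspaceT => t; rewrite inE /= in_itv /= => /andP[tx _].
  by apply: rho_continuous => //; exact: lt_le_trans t1_gt1 tx.
have q_between : Num.min (rho (A2 / A1) (x - d')) (rho (A2 / A1) (x + d')) <= ratr q
    <= Num.max (rho (A2 / A1) (x - d')) (rho (A2 / A1) (x + d')).
  by rewrite ge_min le_max (ltW q1) (ltW q2) orbT.
have x_d' : x - d' <= x + d' by lra.
have [t] := IVT x_d' cont q_between; rewrite in_itv /= => /andP[tl tr] rho_q.
have t1 : 1 <= t by rewrite ltW // (lt_le_trans t1_gt1).
exists t%:E; split; first by split; [rewrite lee_fin | exists q; rewrite r0_EFin_ge1].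
apply: xdB; rewrite /ball /=.
have : `|x - t| <= d' by rewrite ler_norml; apply/andP; split; lra.
lra.
Qed.

End FirstRoot.

Lemma countable_rat_valued (T : Type) (R : realType) (A : set T) (f : T -> R) :
  {in A &, injective f} -> (forall x, A x -> is_rat (f x)) -> countable A.
Proof.
move=> f_inj f_rat; apply/countable_injP.
exists (fun x => choice.pickle (xget 0%R [set q : rat | f x = ratr q])).
move=> x y Ax Ay /(pcan_inj choice.pickleK) eq_xget; apply: f_inj => //.
have [qx fx] := f_rat x (set_mem Ax); have [qy fy] := f_rat y (set_mem Ay).
have := @xgetPex _ 0%R [set q : rat | f x = ratr q] (ex_intro _ qx fx).
have := @xgetPex _ 0%R [set q : rat | f y = ratr q] (ex_intro _ qy fy).
by rewrite /= eq_xget => <- ->.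
Qed.

Theorem corollary1 (R : realType) (a1 a2 : nat) :
  (1 < a1)%N -> (a1 < a2)%N -> coprime a1 a2 ->
  let A1 : R := a1%:R in
  let A2 : R := a2%:R in
  let preQ : set (\bar R) :=
    [set t : \bar R | (1%:E <= t)%E /\ is_rat (r0 A1 A2 t)] in
  (* (1) *)
  (countable preQ /\
   countable [set t : R | 1 < t /\ A2^-1 < `|P A1 A2 t%:E| /\ is_rat (r0 A1 A2 t%:E)])
  (* (2) *)
  /\ {within `[1%:E, +oo%E], continuous (r0 A1 A2)}
  (* (3) *)
  /\ (forall a : R, 1 < a ->
        forall x : R, a < x -> closure preQ x%:E).
Proof.
move=> a1_gt1 a1_lt_a2 _ A1 A2 preQ.
have A1_gt0 : 0 < A1 by rewrite ltr0n (ltn_trans _ a1_gt1).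
have A12 : A1 < A2 by rewrite ltr_nat.
split; [split|split].
- apply: (countable_rat_valued (f := r0 A1 A2)); last by move=> x [].
  by move=> x y /set_mem[x1 _] /set_mem[y1 _]; exact: r0_injective.
- apply: (countable_rat_valued (f := fun t => r0 A1 A2 t%:E)); last by move=> t [_ []].
  move=> x y /set_mem[x1 _] /set_mem[y1 _] r0xy.
  by have [] := r0_injective A1_gt0 A12 (ltW x1 : 1%:E <= x%:E)%E (ltW y1 : 1%:E <= y%:E)%E r0xy.
- exact: r0_continuous.
- by move=> a a_gt1 x ax; apply: closure_r0_rat => //; exact: lt_trans ax.
Qed.
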